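(* Let $n$ be a positive integer, let $R_1,R_2,\dots,R_{n+1}$ be commutative rings and let $R=R_1\times R_2\times\cdots\times R_{n+1}$. Then every proper ideal of $R$ is a weakly $n$-absorbing ideal of $R$ if and only if all of the $R_i$'s are fields.
   Context: All rings are commutative with $1\neq0$. A proper ideal $I$ of $R$ is weakly $n$-absorbing if whenever $0\neq a_1\cdots a_{n+1}\in I$ with $a_1,\dots,a_{n+1}\in R$, there are $n$ of the $a_i$'s whose product is in $I$. *)

From HB Require Import structures.
From mathcomp Require Import all_boot all_order all_algebra.
Set Implicit Arguments. Unset Strict Implicit. Unset Printing Implicit Defensive.
Import GRing.Theory.
Local Open Scope ring_scope.

Definition is_ideal (R : comPzRingType) (I : R -> Prop) : Prop :=
  [/\ I 0,
      (forall x y, I x -> I y -> I (x + y)) &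
      (forall r x, I x -> I (r * x))].

Definition is_proper_ideal (R : comPzRingType) (I : R -> Prop) : Prop :=
  is_ideal I /\ exists x, ~ I x.

Definition weakly_n_absorbing (R : comPzRingType) (n : nat) (I : R -> Prop)
  : Prop :=
  is_proper_ideal I /\
  forall a : 'I_n.+1 -> R,
    \prod_(i < n.+1) a i != 0 -> I (\prod_(i < n.+1) a i) ->
    exists j : 'I_n.+1, I (\prod_(i < n.+1 | i != j) a i).

Definition is_field (F : comNzRingType) : Prop :=
  forall x : F, x != 0 -> exists y : F, x * y = 1.

Section DProd.
Variables (I : finType) (R : I -> comNzRingType).

Definition dprod := {dffun forall i : I, R i}.
HB.instance Definition _ := Choice.on dprod.

Definition dp_zero : dprod := [ffun i => 0].
Definition dp_one : dprod := [ffun i => 1].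
Definition dp_add (f g : dprod) : dprod := [ffun i => f i + g i].
Definition dp_opp (f : dprod) : dprod := [ffun i => - f i].
Definition dp_mul (f g : dprod) : dprod := [ffun i => f i * g i].

Fact dp_addA : associative dp_add.
Proof. by move=> f g h; apply/ffunP=> i; rewrite !ffunE addrA. Qed.
Fact dp_addC : commutative dp_add.
Proof. by move=> f g; apply/ffunP=> i; rewrite !ffunE addrC. Qed.
Fact dp_add0 : left_id dp_zero dp_add.
Proof. by move=> f; apply/ffunP=> i; rewrite !ffunE add0r. Qed.
Fact dp_addN : left_inverse dp_zero dp_opp dp_add.
Proof. by move=> f; apply/ffunP=> i; rewrite !ffunE addNr. Qed.

HB.instance Definition _ := GRing.isZmodule.Build dprod
  dp_addA dp_addC dp_add0 dp_addN.

Fact dp_mulA : associative dp_mul.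
Proof. by move=> f g h; apply/ffunP=> i; rewrite !ffunE mulrA. Qed.
Fact dp_mulC : commutative dp_mul.
Proof. by move=> f g; apply/ffunP=> i; rewrite !ffunE mulrC. Qed.
Fact dp_mul1 : left_id dp_one dp_mul.
Proof. by move=> f; apply/ffunP=> i; rewrite !ffunE mul1r. Qed.
Fact dp_mulD : left_distributive dp_mul (@GRing.add dprod).
Proof. by move=> f g h; apply/ffunP=> i; rewrite !ffunE mulrDl. Qed.

HB.instance Definition _ := GRing.Zmodule_isComPzRing.Build dprod
  dp_mulA dp_mulC dp_mul1 dp_mulD.

Lemma dprod_addE (f g : dprod) i : (f + g) i = f i + g i.
Proof. by rewrite ffunE. Qed.
Lemma dprod_mulE (f g : dprod) i : (f * g) i = f i * g i.
Proof. by rewrite ffunE. Qed.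
Lemma dprod_zeroE i : (0 : dprod) i = 0.
Proof. by rewrite ffunE. Qed.
Lemma dprod_oneE i : (1 : dprod) i = 1.
Proof. by rewrite ffunE. Qed.

End DProd.

From HB Require Import structures.
From mathcomp Require Import all_boot all_order all_algebra.
From Stdlib Require Import Classical.
Set Implicit Arguments. Unset Strict Implicit. Unset Printing Implicit Defensive.
Import GRing.Theory.
Local Open Scope ring_scope.

(* In a product of fields an ideal is determined by its support, so an
   element lies in an ideal I as soon as every coordinate where it is nonzero
   is a coordinate where some element of I is nonzero.  If 0 <> a_1 ... a_{n+1}
   lies in I, at most n coordinates of the product vanish, and each of them is
   killed by some factor; by pigeonhole one factor a_j is needed for none of
   them, and dropping it keeps the support inside that of the product.
   Conversely, if x is a nonzero nonunit of R_t, the ideal x R_t (placed at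
   coordinate t) contains x e_t = a_1 ... a_{n+1}, where a_t has x and the
   other a_i have 0 at their own coordinate and 1 elsewhere; every product of
   n of the a_i has a coordinate equal to 1, so none lies in the ideal. *)

Lemma exists_avoiding_witness (T J : finType) (Z : {set T}) (P : T -> J -> bool) :
  (#|Z| < #|J|)%N -> (forall k, k \in Z -> exists i, P k i) ->
  exists j, forall k, k \in Z -> exists2 i, i != j & P k i.
Proof.
move=> ltZJ witness.
have [i0 _] : exists i0 : J, i0 \in predT by apply/card_gt0P; exact: leq_ltn_trans ltZJ.
pose choice k := odflt i0 [pick i | P k i].
have [j] : exists j, j \in ~: (choice @: Z).
  apply/card_gt0P; rewrite -(ltn_add2l #|choice @: Z|) addn0 cardsC.
  exact: leq_ltn_trans (leq_imset_card _ _) ltZJ.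
rewrite inE => j_notin; exists j => k kZ.
have [i Pki] := witness k kZ.
exists (choice k); last by rewrite /choice; case: pickP => [//|/(_ i)]; rewrite Pki.
by apply: contraNneq j_notin => <-; apply: imset_f.
Qed.

Section FieldFacts.
Variable F : comNzRingType.
Hypothesis F_field : is_field F.

Lemma field_mulf_neq0 (x y : F) : x != 0 -> y != 0 -> x * y != 0.
Proof.
move=> x_neq0 /negP y_neq0; apply/eqP => xy0; apply: y_neq0.
have [w xw1] := F_field x_neq0.
by rewrite -[y]mul1r -xw1 mulrAC xy0 mul0r.
Qed.

Lemma field_prodf_eq0 (J : finType) (P : pred J) (f : J -> F) :
  \prod_(i | P i) f i = 0 -> exists2 i, P i & f i = 0.
Proof.
move=> prod0; case: (pickP [pred i | P i && (f i == 0)]) => [i /andP[Pi /eqP]|none].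
  by exists i.
suff: \prod_(i | P i) f i != 0 by rewrite prod0 eqxx.
apply: (big_ind (fun x => x != 0)); [exact: oner_neq0 | exact: field_mulf_neq0 |].
by move=> i Pi; move: (none i); rewrite /= Pi => /negbT.
Qed.

End FieldFacts.

Section DirectProduct.
Variables (T : finType) (R : T -> comNzRingType).
Implicit Types (f y : dprod R) (I : dprod R -> Prop).

Definition dproj (k : T) (f : dprod R) : R k := f k.

Fact dproj_is_zmod_morphism k : zmod_morphism (dproj k).
Proof. by move=> f g; rewrite /dproj dprod_addE ffunE. Qed.
Fact dproj_is_monoid_morphism k : monoid_morphism (dproj k).
Proof. by split=> [|f g]; rewrite /dproj ?dprod_oneE ?dprod_mulE. Qed.
HB.instance Definition _ k :=
  GRing.isZmodMorphism.Build _ _ (dproj k) (dproj_is_zmod_morphism k).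
HB.instance Definition _ k :=
  GRing.isMonoidMorphism.Build _ _ (dproj k) (dproj_is_monoid_morphism k).

Lemma dprod_prodE (J : Type) (r : seq J) (P : pred J) (F : J -> dprod R) k :
  (\prod_(i <- r | P i) F i) k = \prod_(i <- r | P i) F i k.
Proof. exact: (rmorph_prod (dproj k)). Qed.

Lemma dprod_sumE (J : Type) (r : seq J) (P : pred J) (F : J -> dprod R) k :
  (\sum_(i <- r | P i) F i) k = \sum_(i <- r | P i) F i k.
Proof. exact: (raddf_sum (dproj k)). Qed.

Lemma dprod_neq0P f : reflect (exists k, f k != 0) (f != 0).
Proof.
apply: (iffP idP) => [f_neq0|[k]]; last by apply: contraNneq => ->; rewrite dprod_zeroE.
apply/existsP; apply: contraNT f_neq0; rewrite negb_exists => /forallP f0.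
by apply/eqP/ffunP => k; rewrite dprod_zeroE; apply/eqP/negbNE.
Qed.

Definition dprod_single (k : T) (x : R k) : dprod R :=
  [ffun i => if k =P i is ReflectT e then eq_rect k R x i e else 0].

Lemma dprod_single_at k (x : R k) : dprod_single x k = x.
Proof. by rewrite ffunE; case: eqP => // e; rewrite (eq_axiomK e). Qed.

Lemma dprod_single_off k (x : R k) i : i != k -> dprod_single x i = 0.
Proof. by move=> ik; rewrite ffunE; case: eqP => // e; rewrite e eqxx in ik. Qed.

Lemma dprod_single_neq0 k (x : R k) : x != 0 -> dprod_single x != 0.
Proof. by move=> x_neq0; apply/dprod_neq0P; exists k; rewrite dprod_single_at. Qed.

Lemma ideal_mem_support I y :
  is_ideal I -> (forall k, y k != 0 -> I (dprod_single (1 : R k))) -> I y.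
Proof.
case=> I0 ID IM idempotents.
have -> : y = \sum_k y * dprod_single (1 : R k).
  apply/ffunP => i; rewrite dprod_sumE (bigD1 i) //= big1 ?addr0.
    by rewrite dprod_mulE dprod_single_at mulr1.
  by move=> k ki; rewrite dprod_mulE dprod_single_off ?mulr0 // eq_sym.
apply: (big_ind I) => // k _; have [yk0|] := eqVneq (y k) 0; last first.
  by move/idempotents; apply: IM.
suff -> : y * dprod_single (1 : R k) = 0 by [].
apply/ffunP => i; rewrite dprod_mulE dprod_zeroE.
by have [->|ik] := eqVneq i k; rewrite ?yk0 ?mul0r // dprod_single_off ?mulr0.
Qed.

Lemma field_ideal_single1 I x k :
  is_field (R k) -> is_ideal I -> I x -> x k != 0 -> I (dprod_single (1 : R k)).
Proof.
move=> R_field [_ _ IM] Ix /R_field[w xw1].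
suff -> : dprod_single (1 : R k) = dprod_single w * x by apply: IM.
apply/ffunP => i; rewrite dprod_mulE.
have [->|ik] := eqVneq i k; last by rewrite !dprod_single_off ?mul0r.
by rewrite !dprod_single_at mulrC.
Qed.

Lemma fields_ideal_mem_support I x y :
  (forall k, is_field (R k)) -> is_ideal I -> I x ->
  (forall k, y k != 0 -> x k != 0) -> I y.
Proof.
move=> R_field I_ideal Ix supp; apply: ideal_mem_support => // k /supp.
exact: field_ideal_single1.
Qed.

Definition dprod_diag (d : dprod R) (i : T) : dprod R :=
  1 + dprod_single (d i - 1).

Lemma dprod_diag_off d i k : i != k -> dprod_diag d i k = 1.
Proof.
by move=> ik; rewrite dprod_addE dprod_oneE dprod_single_off 1?eq_sym ?addr0.
Qed.

Lemma dprod_diag_at d k : dprod_diag d k k = d k.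
Proof. by rewrite dprod_addE dprod_oneE dprod_single_at addrC subrK. Qed.

Lemma prod_dprod_diag d : \prod_i dprod_diag d i = d.
Proof.
apply/ffunP => k; rewrite dprod_prodE (bigD1 k) //= big1 ?mulr1 ?dprod_diag_at //.
by move=> i; apply: dprod_diag_off.
Qed.

Lemma prod_dprod_diag_omit d j : (\prod_(i | i != j) dprod_diag d i) j = 1.
Proof. by rewrite dprod_prodE big1 // => i; apply: dprod_diag_off. Qed.

Definition dprod_ideal_at (t : T) (x : R t) (y : dprod R) : Prop :=
  (exists r, y t = x * r) /\ forall k, k != t -> y k = 0.

Lemma dprod_ideal_at_proper t (x : R t) :
  ~ (exists r, x * r = 1) -> is_proper_ideal (dprod_ideal_at x).
Proof.
move=> x_nonunit; split; last first.
  by exists 1 => -[[r r1] _]; apply: x_nonunit; exists r; rewrite -r1 dprod_oneE.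
split.
- by split=> [|k _]; [exists 0; rewrite mulr0|]; rewrite dprod_zeroE.
- move=> y z [[r yt] y0] [[s zt] z0]; split=> [|k kt].
    by exists (r + s); rewrite dprod_addE yt zt mulrDr.
  by rewrite dprod_addE y0 ?z0 ?addr0.
- move=> r y [[s yt] y0]; split=> [|k kt].
    by exists (r t * s); rewrite dprod_mulE yt mulrCA.
  by rewrite dprod_mulE y0 ?mulr0.
Qed.

Lemma dprod_ideal_at_single t (x : R t) : dprod_ideal_at x (dprod_single x).
Proof.
split=> [|k]; first by exists 1; rewrite dprod_single_at mulr1.
exact: dprod_single_off.
Qed.

End DirectProduct.

Lemma fields_weakly_n_absorbing (n : nat) (T : finType) (R : T -> comNzRingType)
    (I : dprod R -> Prop) :
  (#|T| <= n.+1)%N -> (forall k, is_field (R k)) ->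
  is_proper_ideal I -> weakly_n_absorbing n I.
Proof.
move=> card_T R_field I_proper; split=> // a /dprod_neq0P[m pm_neq0] I_prod.
pose Z := [set k | \prod_i a i k == 0].
have card_Z : (#|Z| < #|'I_n.+1|)%N.
  rewrite card_ord; apply: leq_trans card_T; rewrite -cardsT proper_card //.
  by rewrite properT; apply/eqP => /setP/(_ m); rewrite !inE -dprod_prodE (negbTE pm_neq0).
have zero_factor k : k \in Z -> exists i, a i k == 0.
  by rewrite inE => /eqP/(field_prodf_eq0 (R_field k))[i _ /eqP]; exists i.
have [j avoid_j] := exists_avoiding_witness card_Z zero_factor.
exists j; apply: fields_ideal_mem_support R_field I_proper.1 I_prod _ => k.
rewrite !dprod_prodE; apply: contraNN => /eqP pk0.
have [|i ij /eqP aik0] := avoid_j k; first by rewrite inE pk0.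
by rewrite (bigD1 i) //= aik0 mul0r.
Qed.

Lemma weakly_n_absorbing_fields (n : nat) (R : 'I_n.+1 -> comNzRingType) :
  (forall I : dprod R -> Prop, is_proper_ideal I -> weakly_n_absorbing n I) ->
  forall t, is_field (R t).
Proof.
move=> absorbing t x x_neq0; apply: NNPP => x_nonunit.
have [_ absorb] := absorbing _ (dprod_ideal_at_proper x_nonunit).
pose a := dprod_diag (dprod_single x).
have prod_neq0 : \prod_i a i != 0 by rewrite prod_dprod_diag dprod_single_neq0.
have prod_in : dprod_ideal_at x (\prod_i a i).
  by rewrite prod_dprod_diag; apply: dprod_ideal_at_single.
have [j [[r omit_j] omit_off]] := absorb a prod_neq0 prod_in.
have [jt|jt] := eqVneq j t.
  by apply: x_nonunit; exists r; rewrite -omit_j jt prod_dprod_diag_omit.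
by move/eqP: (omit_off j jt); rewrite prod_dprod_diag_omit oner_eq0.
Qed.

Theorem mainTheorem10 (n : nat) (R : 'I_n.+1 -> comNzRingType) :
  (0 < n)%N ->
  ((forall I : dprod R -> Prop, is_proper_ideal I -> weakly_n_absorbing n I)
   <-> (forall i : 'I_n.+1, is_field (R i))).
Proof.
move=> _; split; first exact: weakly_n_absorbing_fields.
by move=> R_field I; apply: fields_weakly_n_absorbing R_field; rewrite card_ord.
Qed.
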